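(* Let $N=2$. Let $\Omega\subset\mathbb{R}^2$ be open, connected and simply connected, with light-cone coordinates $(\xi_L,\xi_R)$, and let $f:\Omega\to\mathbb{C}^2\setminus\{0\}$ be a smooth solution of the Euler--Lagrange equations of the $\mathbb{C}P^{1}$ sigma model on Minkowski space, $$P\Big\{\partial_L\partial_R f-\frac{1}{f^\dagger f}\big((f^\dagger\partial_R f)\,\partial_L f+(f^\dagger\partial_L f)\,\partial_R f\big)\Big\}=0,\qquad P={\bf 1}-\frac{f\otimes f^\dagger}{f^\dagger f},$$ such that the induced metric $G$ of the associated surface $X:\Omega\to su(2)\simeq\mathbb{R}^3$ (defined by $\partial_L X=[\partial_L P,P]$, $\partial_R X=-[\partial_R P,P]$) satisfies $\det G\neq 0$. Then the Gaussian curvature of the surface is constant and equal to $K=-4$; in particular the surface has no umbilical points.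
   Context: Minkowski metric $d\xi_L\,d\xi_R$ with $\xi_L=\xi^1+\xi^2$, $\xi_R=\xi^1-\xi^2$, $\partial_L=\frac12(\partial_{\xi^1}+\partial_{\xi^2})$, $\partial_R=\frac12(\partial_{\xi^1}-\partial_{\xi^2})$. $su(2)$ is identified with $\mathbb{R}^3$ via $(A,B)=-\frac12\mathrm{tr}(AB)$. For a solution $f$, $\partial_L[\partial_R P,P]+\partial_R[\partial_L P,P]=0$, so $X$ exists (up to an additive constant). The induced metric is $G_{BD}=(\partial_B X,\partial_D X)$, $B,D\in\{L,R\}$, i.e. $G_{LL}=J_L=\frac{\partial_L f^\dagger P\partial_L f}{f^\dagger f}$, $G_{RR}=J_R=\frac{\partial_R f^\dagger P\partial_R f}{f^\dagger f}$, $G_{LR}=-\Re\frac{\partial_R f^\dagger P\partial_L f}{f^\dagger f}$, and the Gaussian curvature is $K=\frac{1}{\sqrt{J_LJ_R-G_{LR}^2}}\,\partial_R\Big(\frac{\partial_L G_{LR}-\frac12 G_{LR}\partial_L(\ln J_L)}{\sqrt{J_LJ_R-G_{LR}^2}}\Big)$. *)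

From Stdlib Require Import Reals List.
From Coquelicot Require Import Coquelicot.
Open Scope R_scope.

Definition pt := (R * R)%type.

Definition open_R2 (O : pt -> Prop) : Prop := open O.

Definition connected_R2 (O : pt -> Prop) : Prop :=
  forall U V : pt -> Prop, open U -> open V ->
    (forall p, O p -> U p \/ V p) ->
    (forall p, ~ (O p /\ U p /\ V p)) ->
    (forall p, O p -> ~ U p) \/ (forall p, O p -> ~ V p).

(** Continuous maps on
    [0,1] resp. [0,1]^2 are represented by continuous maps on R resp. R^2
    (every such map extends continuously, e.g. by clamping). *)
Definition simply_connected_R2 (O : pt -> Prop) : Prop :=
  forall g : R -> pt,
    (forall t, continuous g t) ->
    (forall t, 0 <= t <= 1 -> O (g t)) ->
    g 0 = g 1 ->
    exists H : pt -> pt,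
      (forall q, continuous H q) /\
      (forall s t, 0 <= s <= 1 -> 0 <= t <= 1 -> O (H (s, t))) /\
      (forall t, 0 <= t <= 1 -> H (0, t) = g t) /\
      (forall t, 0 <= t <= 1 -> H (1, t) = g 0) /\
      (forall s, 0 <= s <= 1 -> H (s, 0) = g 0 /\ H (s, 1) = g 0).

Definition pd1 (g : pt -> R) (p : pt) : R := Derive (fun t => g (t, snd p)) (fst p).
Definition pd2 (g : pt -> R) (p : pt) : R := Derive (fun t => g (fst p, t)) (snd p).

Fixpoint iter_pd (l : list bool) (g : pt -> R) : pt -> R :=
  match l with
  | nil => g
  | b :: l' => (if b then pd1 else pd2) (iter_pd l' g)
  end.

Definition smooth_on (O : pt -> Prop) (g : pt -> R) : Prop :=
  forall (l : list bool) (p : pt), O p ->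
    continuous (iter_pd l g) p /\
    ex_derive (fun t => iter_pd l g (t, snd p)) (fst p) /\
    ex_derive (fun t => iter_pd l g (fst p, t)) (snd p).

Definition pdL (g : pt -> R) (p : pt) : R := (pd1 g p + pd2 g p) / 2.
Definition pdR (g : pt -> R) (p : pt) : R := (pd1 g p - pd2 g p) / 2.

Definition cdL (g : pt -> C) (p : pt) : C :=
  (pdL (fun q => Re (g q)) p, pdL (fun q => Im (g q)) p).
Definition cdR (g : pt -> C) (p : pt) : C :=
  (pdR (fun q => Re (g q)) p, pdR (fun q => Im (g q)) p).

Definition C2 := (C * C)%type.
Definition vadd (a b : C2) : C2 := (Cplus (fst a) (fst b), Cplus (snd a) (snd b)).
Definition vsub (a b : C2) : C2 := (Cminus (fst a) (fst b), Cminus (snd a) (snd b)).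
Definition vscal (c : C) (a : C2) : C2 := (Cmult c (fst a), Cmult c (snd a)).
Definition vzero : C2 := (RtoC 0, RtoC 0).
Definition herm (a b : C2) : C :=
  Cplus (Cmult (Cconj (fst a)) (fst b)) (Cmult (Cconj (snd a)) (snd b)).

Definition Pproj (f v : C2) : C2 := vsub v (vscal (Cdiv (herm f v) (herm f f)) f).

Definition vdL (F : pt -> C2) (p : pt) : C2 :=
  (cdL (fun q => fst (F q)) p, cdL (fun q => snd (F q)) p).
Definition vdR (F : pt -> C2) (p : pt) : C2 :=
  (cdR (fun q => fst (F q)) p, cdR (fun q => snd (F q)) p).

Definition smoothC2_on (O : pt -> Prop) (F : pt -> C2) : Prop :=
  smooth_on O (fun q => Re (fst (F q))) /\ smooth_on O (fun q => Im (fst (F q))) /\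
  smooth_on O (fun q => Re (snd (F q))) /\ smooth_on O (fun q => Im (snd (F q))).

Definition CP1_EL (F : pt -> C2) (p : pt) : Prop :=
  let f := F p in
  let ff := herm f f in
  Pproj f
    (vsub (vdL (vdR F) p)
       (vscal (Cinv ff)
          (vadd (vscal (herm f (vdR F p)) (vdL F p))
                (vscal (herm f (vdL F p)) (vdR F p))))) = vzero.

(** Induced metric components. *)
Definition J_L (F : pt -> C2) (p : pt) : R :=
  Re (Cdiv (herm (vdL F p) (Pproj (F p) (vdL F p))) (herm (F p) (F p))).
Definition J_R (F : pt -> C2) (p : pt) : R :=
  Re (Cdiv (herm (vdR F p) (Pproj (F p) (vdR F p))) (herm (F p) (F p))).
Definition G_LR (F : pt -> C2) (p : pt) : R :=
  - Re (Cdiv (herm (vdR F p) (Pproj (F p) (vdL F p))) (herm (F p) (F p))).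

Definition detG (F : pt -> C2) (p : pt) : R :=
  J_L F p * J_R F p - G_LR F p ^ 2.

Definition gaussK (F : pt -> C2) (p : pt) : R :=
  / sqrt (detG F p) *
  pdR (fun q => (pdL (G_LR F) q - / 2 * G_LR F q * pdL (fun r => ln (J_L F r)) q)
                / sqrt (detG F q)) p.

(* Write P = (1 - n·σ)/2, where n = hopf ∘ f maps Ω to the unit sphere of
   su(2) ≅ R³.  The metric induced by X is a quarter of the pullback by n of the
   round metric, and the Euler–Lagrange equations say exactly that n is a wave
   map: n_LR = -(n_L·n_R) n.  Differentiating |n| = 1 and the wave equation
   expresses every derivative of the metric occurring in the curvature formula
   through inner products of n, n_L, n_R, n_LL, n_RR.  Since det G ≠ 0 and
   n ⊥ n_L, n_R, the vectors n_L, n_R, n form a basis, and the Gram identity for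
   this basis eliminates n_LL·n_RR; the formula then collapses to -4.  The
   computation is pointwise. *)

From Stdlib Require Import Reals Lra.
From Coquelicot Require Import Coquelicot.
Open Scope R_scope.

(** * Partial derivatives on R² *)

Definition line (b : bool) (p : pt) (t : R) : pt := if b then (t, snd p) else (fst p, t).
Definition base (b : bool) (p : pt) : R := if b then fst p else snd p.

(* [pd true] is [pd1] and [pd false] is [pd2], up to conversion. *)
Definition pd (b : bool) (g : pt -> R) (p : pt) : R :=
  Derive (fun t => g (line b p t)) (base b p).
Definition ex_pd (b : bool) (g : pt -> R) (p : pt) : Prop :=
  ex_derive (fun t => g (line b p t)) (base b p).

Lemma line_base b p : line b p (base b p) = p.
Proof. destruct b, p; reflexivity. Qed.

Lemma line_locally (O : pt -> Prop) b p : open O -> O p ->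
  locally (base b p) (fun t => O (line b p t)).
Proof.
  intros HO Hp. destruct (HO p Hp) as [eps H]. exists eps. intros t Ht. apply H.
  destruct b; split; simpl; try exact Ht; apply ball_center.
Qed.

Lemma pd_ext (O : pt -> Prop) b g h p : open O ->
  (forall q, O q -> g q = h q) -> O p -> pd b g p = pd b h p.
Proof.
  intros HO E Hp. apply Derive_ext_loc.
  apply (filter_imp (fun t => O (line b p t))); [intros t Ht; now apply E|].
  now apply line_locally.
Qed.

Lemma ex_pd_ext (O : pt -> Prop) b g h p : open O ->
  (forall q, O q -> g q = h q) -> O p -> ex_pd b g p -> ex_pd b h p.
Proof.
  intros HO E Hp. apply ex_derive_ext_loc.
  apply (filter_imp (fun t => O (line b p t))); [intros t Ht; now apply E|].
  now apply line_locally.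
Qed.

Lemma pd_plus b g h p : ex_pd b g p -> ex_pd b h p ->
  pd b (fun q => g q + h q) p = pd b g p + pd b h p.
Proof. intros. now apply Derive_plus. Qed.

Lemma pd_mult b g h p : ex_pd b g p -> ex_pd b h p ->
  pd b (fun q => g q * h q) p = pd b g p * h p + g p * pd b h p.
Proof. intros. unfold pd. rewrite Derive_mult by assumption. now rewrite line_base. Qed.

Lemma pd_const b c p : pd b (fun _ => c) p = 0.
Proof. apply (Derive_const c). Qed.

Lemma pd_inv b g p : ex_pd b g p -> g p <> 0 ->
  pd b (fun q => / g q) p = - pd b g p / (g p * g p).
Proof.
  intros H Hz. apply is_derive_unique.
  replace (g p * g p) with (g (line b p (base b p)) ^ 2) by (rewrite line_base; ring).
  apply (is_derive_inv (fun t => g (line b p t))); [now apply Derive_correct|].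
  now rewrite line_base.
Qed.

Lemma pd_sqrt b g p : ex_pd b g p -> 0 < g p ->
  pd b (fun q => sqrt (g q)) p = pd b g p / (2 * sqrt (g p)).
Proof.
  intros H Hz. rewrite <- (line_base b p) in Hz.
  pose proof (is_derive_sqrt _ _ _ (Derive_correct _ _ H) Hz) as Hd.
  cbv beta in Hd. rewrite line_base in Hd. now apply is_derive_unique.
Qed.

Lemma pd_ln b g p : ex_pd b g p -> 0 < g p ->
  pd b (fun q => ln (g q)) p = pd b g p / g p.
Proof.
  intros H Hz. rewrite <- (line_base b p) in Hz.
  pose proof (is_derive_comp _ _ _ _ _ (is_derive_ln _ Hz) (Derive_correct _ _ H)) as Hd.
  cbv beta in Hd. rewrite line_base in Hd. now apply is_derive_unique.
Qed.

Lemma iter_pd_snoc l b g : iter_pd (l ++ b :: nil) g = iter_pd l (pd b g).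
Proof. induction l as [|c l IH]; simpl; [now destruct b | now rewrite IH]. Qed.

(* Unlike [smooth_on], this class is visibly closed
   under products and partial derivatives ([regular_pd]), which is all the
   calculus below needs. *)
Inductive regular (O : pt -> Prop) : (pt -> R) -> Prop :=
| regular_smooth g : smooth_on O g -> regular O g
| regular_const c : regular O (fun _ => c)
| regular_plus g h : regular O g -> regular O h -> regular O (fun q => g q + h q)
| regular_mult g h : regular O g -> regular O h -> regular O (fun q => g q * h q)
| regular_inv g : regular O g -> (forall q, O q -> g q <> 0) -> regular O (fun q => / g q)
| regular_sqrt g : regular O g -> (forall q, O q -> 0 < g q) -> regular O (fun q => sqrt (g q))
| regular_ext g h : regular O g -> (forall q, O q -> g q = h q) -> regular O h.

Section Regular.
Variables (O : pt -> Prop) (HO : open O).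

Lemma regular_ex_pd_continuous g : regular O g ->
  forall p, O p -> (forall b, ex_pd b g p) /\ continuous g p.
Proof.
  induction 1 as [g Hg|c|g h _ IHg _ IHh|g h _ IHg _ IHh|g _ IHg Hnz|g _ IHg Hpos|g h _ IHg E];
    intros p Hp.
  - destruct (Hg nil p Hp) as (Hc & H1 & H2). now split; [intros []|].
  - split; [intros b; unfold ex_pd; apply ex_derive_const | apply continuous_const].
  - destruct (IHg p Hp) as [Dg Cg], (IHh p Hp) as [Dh Ch]. split.
    + intros b. exact (ex_derive_plus _ _ _ (Dg b) (Dh b)).
    + exact (continuous_plus g h p Cg Ch).
  - destruct (IHg p Hp) as [Dg Cg], (IHh p Hp) as [Dh Ch]. split.
    + intros b. exact (ex_derive_mult _ _ _ (Dg b) (Dh b)).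
    + exact (continuous_mult g h p Cg Ch).
  - destruct (IHg p Hp) as [Hd Hc]. split.
    + intros b. apply (ex_derive_inv (fun t => g (line b p t))); [apply Hd|].
      rewrite line_base. now apply Hnz.
    + apply (continuous_comp g Rinv); [exact Hc | apply continuous_Rinv; now apply Hnz].
  - destruct (IHg p Hp) as [Hd Hc]. split.
    + intros b. destruct (Hd b) as [l Hl]. eexists.
      apply (is_derive_sqrt (fun t => g (line b p t))); [exact Hl|].
      rewrite line_base. now apply Hpos.
    + apply (continuous_comp g sqrt); [exact Hc | apply continuous_sqrt].
  - destruct (IHg p Hp) as [Hd Hc]. split.
    + intros b. now apply (ex_pd_ext O b g h p HO E Hp).
    + apply (continuous_ext_loc _ g); [|exact Hc].
      apply (locally_open O); [exact HO | exact E | exact Hp].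
Qed.

Lemma regular_ex_pd g b p : regular O g -> O p -> ex_pd b g p.
Proof. intros Hg Hp. now apply (regular_ex_pd_continuous g Hg p Hp). Qed.

Lemma regular_continuous g p : regular O g -> O p -> continuous g p.
Proof. intros Hg Hp. now apply (regular_ex_pd_continuous g Hg p Hp). Qed.

Lemma regular_opp g : regular O g -> regular O (fun q => - g q).
Proof.
  intros Hg. apply (regular_ext O (fun q => (-1) * g q)); [|intros; ring].
  now apply regular_mult; [apply regular_const|].
Qed.

Lemma regular_pd b g : regular O g -> regular O (pd b g).
Proof.
  induction 1 as [g Hg|c|g h Hg IHg Hh IHh|g h Hg IHg Hh IHh
                 |g Hg IHg Hnz|g Hg IHg Hpos|g h Hg IHg E].
  - apply regular_smooth. intros l p Hp. rewrite <- iter_pd_snoc. now apply Hg.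
  - apply (regular_ext O (fun _ => 0)); [apply regular_const | intros; now rewrite pd_const].
  - apply (regular_ext O (fun q => pd b g q + pd b h q)); [now apply regular_plus|].
    intros q Hq. rewrite pd_plus; auto; now apply regular_ex_pd.
  - apply (regular_ext O (fun q => pd b g q * h q + g q * pd b h q)).
    + now apply regular_plus; apply regular_mult.
    + intros q Hq. rewrite pd_mult; auto; now apply regular_ex_pd.
  - apply (regular_ext O (fun q => - pd b g q * (/ g q * / g q))).
    + apply regular_mult; [now apply regular_opp|].
      now apply regular_mult; apply regular_inv.
    + intros q Hq. rewrite pd_inv; [field; auto | now apply regular_ex_pd | auto].
  - assert (Hsqrt : forall q, O q -> sqrt (g q) <> 0).
    { intros q Hq. apply Rgt_not_eq, sqrt_lt_R0. auto. }
    apply (regular_ext O (fun q => pd b g q * (/ 2 * / sqrt (g q)))).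
    + apply regular_mult; [exact IHg|].
      apply regular_mult; [apply regular_const|].
      now apply regular_inv; [apply regular_sqrt|].
    + intros q Hq. rewrite pd_sqrt; [field; auto | now apply regular_ex_pd | auto].
  - apply (regular_ext O (pd b g)); [exact IHg|].
    intros q Hq. now apply (pd_ext O).
Qed.

End Regular.

Lemma pd_comm O g p : open O -> regular O g -> O p ->
  pd true (pd false g) p = pd false (pd true g) p.
Proof.
  intros HO Hg Hp. destruct p as [x y].
  change (Derive (fun z => Derive (fun t => (fun u v => g (u, v)) z t) y) x =
          Derive (fun z => Derive (fun t => (fun u v => g (u, v)) t z) x) y).
  assert (Hpd : forall b1 b2, continuous (pd b1 (pd b2 g)) (x, y)).
  { intros. apply (regular_continuous O HO); [|exact Hp]. now do 2 apply (regular_pd O HO). }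
  apply Schwarz.
  - apply locally_2d_locally. apply (locally_open O); auto.
    intros [u v] Huv. repeat split.
    + exact (regular_ex_pd O HO g true (u, v) Hg Huv).
    + exact (regular_ex_pd O HO g false (u, v) Hg Huv).
    + exact (regular_ex_pd O HO _ true (u, v) (regular_pd O HO false g Hg) Huv).
    + exact (regular_ex_pd O HO _ false (u, v) (regular_pd O HO true g Hg) Huv).
  - apply continuity_2d_pt_filterlim. exact (Hpd true false).
  - apply continuity_2d_pt_filterlim. exact (Hpd false true).
Qed.

Lemma regular_minus O g h : regular O g -> regular O h -> regular O (fun q => g q - h q).
Proof. intros. apply regular_plus; [|apply regular_opp]; assumption. Qed.

Lemma regular_div O g h : regular O g -> regular O h -> (forall q, O q -> h q <> 0) ->
  regular O (fun q => g q / h q).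
Proof. intros. apply regular_mult; [|apply regular_inv]; assumption. Qed.

Lemma regular_pow2 O g : regular O g -> regular O (fun q => g q ^ 2).
Proof.
  intros. apply (regular_ext O (fun q => g q * g q)); [now apply regular_mult | intros; ring].
Qed.

Definition dir_deriv (D : (pt -> R) -> pt -> R) : Prop :=
  exists a b : R, forall g p, D g p = a * pd true g p + b * pd false g p.

Lemma dir_deriv_pdL : dir_deriv pdL.
Proof. exists (/ 2), (/ 2). intros g p. unfold pdL, pd1, pd2, pd. cbn. field. Qed.

Lemma dir_deriv_pdR : dir_deriv pdR.
Proof. exists (/ 2), (- / 2). intros g p. unfold pdR, pd1, pd2, pd. cbn. field. Qed.

Section DirectionalDerivative.
Variables (O : pt -> Prop) (HO : open O) (D : (pt -> R) -> pt -> R) (HD : dir_deriv D).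

Lemma regular_dir g : regular O g -> regular O (D g).
Proof.
  intros Hg. destruct HD as (a & b & HDab).
  apply (regular_ext O (fun q => a * pd true g q + b * pd false g q)); [|intros; now rewrite HDab].
  apply regular_plus; apply regular_mult; try apply regular_const; now apply regular_pd.
Qed.

Lemma dir_ext g h p : (forall q, O q -> g q = h q) -> O p -> D g p = D h p.
Proof.
  intros E Hp. destruct HD as (a & b & HDab). rewrite !HDab.
  rewrite (pd_ext O true g h), (pd_ext O false g h); auto.
Qed.

Lemma dir_const c p : D (fun _ => c) p = 0.
Proof. destruct HD as (a & b & HDab). rewrite HDab, !pd_const. ring. Qed.

Ltac by_pd rule :=
  intros; destruct HD as (a & b & HDab);
  rewrite !HDab, !rule by (auto; now apply (regular_ex_pd O)).

Lemma dir_plus g h p : regular O g -> regular O h -> O p ->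
  D (fun q => g q + h q) p = D g p + D h p.
Proof. by_pd pd_plus. ring. Qed.

Lemma dir_mult g h p : regular O g -> regular O h -> O p ->
  D (fun q => g q * h q) p = D g p * h p + g p * D h p.
Proof. by_pd pd_mult. ring. Qed.

Lemma dir_inv g p : regular O g -> O p -> g p <> 0 ->
  D (fun q => / g q) p = - D g p / (g p * g p).
Proof. by_pd pd_inv. field. auto. Qed.

Lemma dir_sqrt g p : regular O g -> O p -> 0 < g p ->
  D (fun q => sqrt (g q)) p = D g p / (2 * sqrt (g p)).
Proof.
  assert (0 < g p -> sqrt (g p) <> 0) by (intros; now apply Rgt_not_eq, sqrt_lt_R0).
  by_pd pd_sqrt. field. auto.
Qed.

Lemma dir_ln g p : regular O g -> O p -> 0 < g p ->
  D (fun q => ln (g q)) p = D g p / g p.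
Proof. by_pd pd_ln. field. lra. Qed.

Lemma dir_opp g p : regular O g -> O p -> D (fun q => - g q) p = - D g p.
Proof.
  intros Hg Hp. rewrite (dir_ext _ (fun q => -1 * g q)) by (auto; intros; ring).
  rewrite dir_mult, dir_const; auto using regular_const. ring.
Qed.

Lemma dir_minus g h p : regular O g -> regular O h -> O p ->
  D (fun q => g q - h q) p = D g p - D h p.
Proof. intros. unfold Rminus. rewrite dir_plus, dir_opp; auto using regular_opp. Qed.

Lemma dir_div g h p : regular O g -> regular O h -> (forall q, O q -> h q <> 0) -> O p ->
  D (fun q => g q / h q) p = (D g p * h p - g p * D h p) / (h p * h p).
Proof.
  intros. unfold Rdiv at 1. rewrite dir_mult, dir_inv; auto using regular_inv. field. auto.
Qed.

Lemma dir_pow2 g p : regular O g -> O p -> D (fun q => g q ^ 2) p = 2 * g p * D g p.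
Proof.
  intros. rewrite (dir_ext _ (fun q => g q * g q)) by (auto; intros; ring).
  rewrite dir_mult; auto. ring.
Qed.

End DirectionalDerivative.

Lemma dir_comm (O : pt -> Prop) D1 D2 g p : open O -> dir_deriv D1 -> dir_deriv D2 ->
  regular O g -> O p -> D1 (D2 g) p = D2 (D1 g) p.
Proof.
  intros HO (a1 & b1 & E1) (a2 & b2 & E2) Hg Hp.
  assert (pd_lincomb : forall D a b c, (forall h q, D h q = a * pd true h q + b * pd false h q) ->
            pd c (D g) p = a * pd c (pd true g) p + b * pd c (pd false g) p).
  { intros D a b c E. erewrite (pd_ext O c (D g)); [| |intros; apply E|]; auto.
    rewrite pd_plus, !pd_mult, !pd_const; try ring;
      apply (regular_ex_pd O HO);
      auto 6 using regular_plus, regular_mult, regular_const, regular_pd. }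
  rewrite E1, E2, (pd_lincomb D1 a1 b1), (pd_lincomb D1 a1 b1), (pd_lincomb D2 a2 b2),
    (pd_lincomb D2 a2 b2), (pd_comm O g p); auto. ring.
Qed.

Ltac regular_tac :=
  match goal with HO : open ?O |- _ =>
    repeat first
      [ assumption
      | apply (regular_dir O HO pdL dir_deriv_pdL)
      | apply (regular_dir O HO pdR dir_deriv_pdR)
      | apply regular_const | apply regular_minus | apply regular_plus | apply regular_opp
      | apply regular_div | apply regular_mult | apply regular_inv | apply regular_pow2
      | apply regular_sqrt ]
  end.

Ltac side_tac := solve [regular_tac | eauto].

Ltac expand D HD :=
  match goal with HO : open ?O |- _ =>
    repeat first
      [ rewrite (dir_const D HD)
      | rewrite (dir_minus O HO D HD) by side_tac
      | rewrite (dir_plus O HO D HD) by side_tac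
      | rewrite (dir_opp O HO D HD) by side_tac
      | rewrite (dir_div O HO D HD) by side_tac
      | rewrite (dir_mult O HO D HD) by side_tac
      | rewrite (dir_inv O HO D HD) by side_tac
      | rewrite (dir_pow2 O HO D HD) by side_tac
      | rewrite (dir_sqrt O HO D HD) by side_tac
      | rewrite (dir_ln O HO D HD) by side_tac ]
  end.

Ltac expand_L := expand pdL dir_deriv_pdL.
Ltac expand_R := expand pdR dir_deriv_pdR.

(** * Vector-valued functions *)

Record vec3 := Vec3 { vx : R; vy : R; vz : R }.

Definition dot (u w : vec3) : R := vx u * vx w + vy u * vy w + vz u * vz w.

Definition scale (c : R) (u : vec3) : vec3 := Vec3 (c * vx u) (c * vy u) (c * vz u).

Lemma dot_comm u w : dot u w = dot w u.
Proof. unfold dot. ring. Qed.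

Lemma dot_sqr_le u w : dot u w ^ 2 <= dot u u * dot w w.
Proof.
  assert (Hlagrange : dot u u * dot w w - dot u w ^ 2 =
    (vx u * vy w - vy u * vx w) ^ 2 + (vx u * vz w - vz u * vx w) ^ 2
    + (vy u * vz w - vz u * vy w) ^ 2) by (unfold dot; ring).
  cut (0 <= dot u u * dot w w - dot u w ^ 2); [lra|]. rewrite Hlagrange.
  repeat apply Rplus_le_le_0_compat; apply pow2_ge_0.
Qed.

Lemma dot_self_ge0 u : 0 <= dot u u.
Proof. unfold dot. nra. Qed.

Lemma dot_scale_l c u w : dot (scale c u) w = c * dot u w.
Proof. unfold dot, scale. simpl. ring. Qed.

Lemma dot_gram_orthonormal (a b n c d : vec3) :
  dot n n = 1 -> dot a n = 0 -> dot b n = 0 ->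
  dot c d * (dot a a * dot b b - dot a b ^ 2) =
    dot b b * dot c a * dot d a - dot a b * (dot c a * dot d b + dot c b * dot d a)
    + dot a a * dot c b * dot d b + (dot a a * dot b b - dot a b ^ 2) * dot c n * dot d n.
Proof.
  intros Hnn Han Hbn.
  assert (Hgram :
    dot c d * (dot a a * (dot b b * dot n n - dot b n ^ 2)
               - dot a b * (dot a b * dot n n - dot b n * dot a n)
               + dot a n * (dot a b * dot b n - dot b b * dot a n)) =
      (dot b b * dot n n - dot b n ^ 2) * dot c a * dot d a
      + (dot a n * dot b n - dot a b * dot n n) * (dot c a * dot d b + dot c b * dot d a)
      + (dot a b * dot b n - dot a n * dot b b) * (dot c a * dot d n + dot c n * dot d a)
      + (dot a a * dot n n - dot a n ^ 2) * dot c b * dot d b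
      + (dot a b * dot a n - dot a a * dot b n) * (dot c b * dot d n + dot c n * dot d b)
      + (dot a a * dot b b - dot a b ^ 2) * dot c n * dot d n).
  { destruct a, b, c, d, n. unfold dot. simpl. ring. }
  rewrite Hnn, Han, Hbn in Hgram. lra.
Qed.

Definition vD (D : (pt -> R) -> pt -> R) (u : pt -> vec3) (p : pt) : vec3 :=
  Vec3 (D (fun q => vx (u q)) p) (D (fun q => vy (u q)) p) (D (fun q => vz (u q)) p).

Definition regularV (O : pt -> Prop) (u : pt -> vec3) : Prop :=
  regular O (fun q => vx (u q)) /\ regular O (fun q => vy (u q)) /\ regular O (fun q => vz (u q)).

Section VectorDerivative.
Variables (O : pt -> Prop) (HO : open O).

Lemma regularV_dir D u : dir_deriv D -> regularV O u -> regularV O (vD D u).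
Proof. intros HD (Hx & Hy & Hz). repeat split; now apply (regular_dir O HO D HD). Qed.

Lemma regular_dot u w : regularV O u -> regularV O w -> regular O (fun q => dot (u q) (w q)).
Proof. intros (? & ? & ?) (? & ? & ?). unfold dot. regular_tac. Qed.

Lemma vD_ext D u w p : dir_deriv D -> (forall q, O q -> u q = w q) -> O p -> vD D u p = vD D w p.
Proof.
  intros HD E Hp. unfold vD.
  f_equal; apply (dir_ext O HO D HD); auto; intros q Hq; now rewrite E.
Qed.

Lemma vD_comm D1 D2 u p : dir_deriv D1 -> dir_deriv D2 -> regularV O u -> O p ->
  vD D1 (vD D2 u) p = vD D2 (vD D1 u) p.
Proof. intros HD1 HD2 (Hx & Hy & Hz) Hp. unfold vD. cbn. f_equal; now apply (dir_comm O). Qed.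

Lemma dir_dot D u w p : dir_deriv D -> regularV O u -> regularV O w -> O p ->
  D (fun q => dot (u q) (w q)) p = dot (vD D u p) (w p) + dot (u p) (vD D w p).
Proof.
  intros HD (? & ? & ?) (? & ? & ?) Hp. unfold dot. expand D HD. unfold vD. cbn. ring.
Qed.

Lemma dot_dir_scale D g u w p : dir_deriv D -> regular O g -> regularV O u -> O p ->
  dot (vD D (fun q => scale (g q) (u q)) p) w = D g p * dot (u p) w + g p * dot (vD D u p) w.
Proof.
  intros HD Hg (? & ? & ?) Hp. unfold vD, scale, dot. cbn. expand D HD. ring.
Qed.

Lemma dot_dir_const D u w c p : dir_deriv D -> regularV O u -> regularV O w ->
  (forall q, O q -> dot (u q) (w q) = c) -> O p ->
  dot (vD D u p) (w p) + dot (u p) (vD D w p) = 0.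
Proof.
  intros HD Hu Hw E Hp. rewrite <- (dir_dot D u w p HD Hu Hw Hp).
  rewrite (dir_ext O HO D HD _ (fun _ => c)); auto. apply (dir_const D HD).
Qed.

End VectorDerivative.

Lemma dir_scaled_dot O D c u w p : open O -> dir_deriv D -> regularV O u -> regularV O w -> O p ->
  D (fun q => c * dot (u q) (w q)) p = c * (dot (vD D u p) (w p) + dot (u p) (vD D w p)).
Proof.
  intros HO HD Hu Hw Hp. rewrite (dir_mult O HO D HD); auto using regular_const, regular_dot.
  rewrite (dir_const D HD), (dir_dot O HO); auto. ring.
Qed.

(** * The curvature formula *)

Definition gauss_curvature (E F G : pt -> R) (p : pt) : R :=
  / sqrt (E p * G p - F p ^ 2) *
  pdR (fun q => (pdL F q - / 2 * F q * pdL (fun r => ln (E r)) q) / sqrt (E q * G q - F q ^ 2)) p.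

Definition curvature_expr (E F G EL ER GR FL FR ELR FLR : R) : R :=
  let D := E * G - F ^ 2 in
  let Y := FL - F * EL / (2 * E) in
  let YR := FLR - (FR * EL + F * ELR) / (2 * E) + F * EL * ER / (2 * E ^ 2) in
  let DR := ER * G + E * GR - 2 * F * FR in
  (YR * D - Y * DR / 2) / D ^ 2.

Section GaussCurvature.
Variables (O : pt -> Prop) (HO : open O) (E F G : pt -> R).

Lemma gauss_curvature_ext E' F' G' p :
  (forall q, O q -> E q = E' q) -> (forall q, O q -> F q = F' q) -> (forall q, O q -> G q = G' q) ->
  O p -> gauss_curvature E F G p = gauss_curvature E' F' G' p.
Proof.
  intros HE HF HG Hp. unfold gauss_curvature. rewrite HE, HF, HG by exact Hp.
  f_equal. apply (dir_ext O HO pdR dir_deriv_pdR); [intros q Hq|exact Hp].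
  rewrite HE, HF, HG by exact Hq.
  rewrite (dir_ext O HO pdL dir_deriv_pdL F F'),
    (dir_ext O HO pdL dir_deriv_pdL (fun r => ln (E r)) (fun r => ln (E' r))); auto.
  intros r Hr. now rewrite HE.
Qed.

Hypotheses (E_reg : regular O E) (F_reg : regular O F) (G_reg : regular O G)
  (E_pos : forall q, O q -> 0 < E q) (det_pos : forall q, O q -> 0 < E q * G q - F q ^ 2).

Lemma gauss_curvature_explicit p : O p ->
  gauss_curvature E F G p =
  curvature_expr (E p) (F p) (G p) (pdL E p) (pdR E p) (pdR G p) (pdL F p) (pdR F p)
    (pdR (pdL E) p) (pdR (pdL F) p).
Proof.
  intros Hp.
  assert (E_nz : forall q, O q -> E q <> 0) by (intros q Hq; specialize (E_pos q Hq); lra).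
  assert (sqrt_nz : forall q, O q -> sqrt (E q * G q - F q ^ 2) <> 0)
    by (intros q Hq; now apply Rgt_not_eq, sqrt_lt_R0, det_pos).
  unfold gauss_curvature.
  rewrite (dir_ext O HO pdR dir_deriv_pdR _
             (fun q => (pdL F q - / 2 * F q * (pdL E q / E q)) / sqrt (E q * G q - F q ^ 2)));
    [|intros q Hq; expand_L; reflexivity|exact Hp].
  expand_R.
  pose proof (sqrt_sqrt _ (Rlt_le _ _ (det_pos p Hp))) as Hsq.
  pose proof (sqrt_nz p Hp). pose proof (E_nz p Hp).
  set (r := sqrt (E p * G p - F p ^ 2)) in *.
  unfold curvature_expr. cbv zeta. rewrite <- Hsq. field. auto.
Qed.

End GaussCurvature.

Lemma curvature_expr_wave (A B s ca cb da db cd : R) :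
  A <> 0 -> A * B - s ^ 2 <> 0 ->
  cd * (A * B - s ^ 2) =
    B * ca * da - s * (ca * db + cb * da) + A * cb * db + (A * B - s ^ 2) * (A * B) ->
  curvature_expr (/ 4 * A) (- / 4 * s) (/ 4 * B) (/ 2 * ca) 0 (/ 2 * db) (- / 4 * cb) (- / 4 * da)
    0 (- / 4 * (cd - s ^ 2)) = -4.
Proof.
  intros HA Hdet Hgram.
  replace cd with ((B * ca * da - s * (ca * db + cb * da) + A * cb * db) / (A * B - s ^ 2) + A * B)
    by (apply (Rmult_eq_reg_r (A * B - s ^ 2)); [rewrite Hgram; field|]; auto).
  unfold curvature_expr. cbv zeta. field.
  split; [|auto]. intro H0. apply Hdet. nra.
Qed.

(** * Wave maps into the sphere *)

(* A quarter of the pullback of the round metric by [n], with the sign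
   convention of [G_LR] for the mixed coefficient. *)
Definition metric_LL (n : pt -> vec3) (q : pt) : R := / 4 * dot (vD pdL n q) (vD pdL n q).
Definition metric_LR (n : pt -> vec3) (q : pt) : R := - / 4 * dot (vD pdL n q) (vD pdR n q).
Definition metric_RR (n : pt -> vec3) (q : pt) : R := / 4 * dot (vD pdR n q) (vD pdR n q).

Section WaveMap.
Variables (O : pt -> Prop) (n : pt -> vec3).
Hypotheses (HO : open O) (n_reg : regularV O n)
  (n_unit : forall q, O q -> dot (n q) (n q) = 1)
  (n_wave : forall q, O q ->
     vD pdL (vD pdR n) q = scale (- dot (vD pdL n q) (vD pdR n q)) (n q))
  (metric_nondeg : forall q, O q ->
     metric_LL n q * metric_RR n q - metric_LR n q ^ 2 <> 0).

Local Notation nL := (vD pdL n).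
Local Notation nR := (vD pdR n).
Local Notation nLL := (vD pdL nL).
Local Notation nRR := (vD pdR nR).

Local Hint Resolve dir_deriv_pdL dir_deriv_pdR regularV_dir : core.

Local Notation s q := (dot (nL q) (nR q)).

Lemma dot_nL_n q : O q -> dot (nL q) (n q) = 0.
Proof.
  intros Hq. pose proof (dot_dir_const O HO pdL n n 1 q dir_deriv_pdL n_reg n_reg n_unit Hq).
  rewrite (dot_comm (n q)) in H. lra.
Qed.

Lemma dot_nR_n q : O q -> dot (nR q) (n q) = 0.
Proof.
  intros Hq. pose proof (dot_dir_const O HO pdR n n 1 q dir_deriv_pdR n_reg n_reg n_unit Hq).
  rewrite (dot_comm (n q)) in H. lra.
Qed.

Lemma nRL_wave q : O q -> vD pdR nL q = scale (- s q) (n q).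
Proof. intros Hq. rewrite (vD_comm O HO); auto. Qed.

Lemma dot_nLL_n p : O p -> dot (nLL p) (n p) = - dot (nL p) (nL p).
Proof.
  intros Hp.
  pose proof (dot_dir_const O HO pdL nL n 0 p dir_deriv_pdL
                (regularV_dir O HO _ _ dir_deriv_pdL n_reg) n_reg dot_nL_n Hp).
  lra.
Qed.

Lemma dot_nRR_n p : O p -> dot (nRR p) (n p) = - dot (nR p) (nR p).
Proof.
  intros Hp.
  pose proof (dot_dir_const O HO pdR nR n 0 p dir_deriv_pdR
                (regularV_dir O HO _ _ dir_deriv_pdR n_reg) n_reg dot_nR_n Hp).
  lra.
Qed.

Lemma dot_nLR_nL q : O q -> dot (vD pdL nR q) (nL q) = 0.
Proof. intros Hq. rewrite n_wave, dot_scale_l, (dot_comm (n q)), dot_nL_n by exact Hq. ring. Qed.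

Lemma dot_nRL_nL q : O q -> dot (vD pdR nL q) (nL q) = 0.
Proof. intros Hq. rewrite nRL_wave, dot_scale_l, (dot_comm (n q)), dot_nL_n by exact Hq. ring. Qed.

Lemma dot_nRL_nR q : O q -> dot (vD pdR nL q) (nR q) = 0.
Proof. intros Hq. rewrite nRL_wave, dot_scale_l, (dot_comm (n q)), dot_nR_n by exact Hq. ring. Qed.

Lemma dot_nLLR_nR p : O p -> dot (vD pdR nLL p) (nR p) = - s p ^ 2.
Proof.
  intros Hp. rewrite (vD_comm O HO pdR pdL); auto.
  rewrite (vD_ext O HO pdL _ (fun q => scale (- s q) (n q))); auto using nRL_wave.
  rewrite (dot_dir_scale O HO); auto.
  - rewrite (dot_comm (n p)), dot_nR_n by exact Hp. ring.
  - apply regular_opp, regular_dot; auto.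
Qed.

Lemma metric_LL_regular : regular O (metric_LL n).
Proof. apply regular_mult; [apply regular_const | apply regular_dot; auto]. Qed.

Lemma metric_LR_regular : regular O (metric_LR n).
Proof. apply regular_mult; [apply regular_const | apply regular_dot; auto]. Qed.

Lemma metric_RR_regular : regular O (metric_RR n).
Proof. apply regular_mult; [apply regular_const | apply regular_dot; auto]. Qed.

Lemma pdL_metric_LL p : O p -> pdL (metric_LL n) p = / 2 * dot (nLL p) (nL p).
Proof.
  intros Hp. unfold metric_LL. rewrite (dir_scaled_dot O); auto.
  rewrite (dot_comm (nL p)). field.
Qed.

Lemma pdR_metric_LL q : O q -> pdR (metric_LL n) q = 0.
Proof.
  intros Hq. unfold metric_LL. rewrite (dir_scaled_dot O); auto.
  rewrite (dot_comm (nL q)), dot_nRL_nL by exact Hq. ring.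
Qed.

Lemma pdR_pdL_metric_LL p : O p -> pdR (pdL (metric_LL n)) p = 0.
Proof.
  intros Hp. rewrite (dir_comm O); auto using metric_LL_regular.
  rewrite (dir_ext O HO pdL dir_deriv_pdL _ (fun _ => 0)); auto using pdR_metric_LL.
  apply (dir_const pdL dir_deriv_pdL).
Qed.

Lemma pdR_metric_RR p : O p -> pdR (metric_RR n) p = / 2 * dot (nRR p) (nR p).
Proof.
  intros Hp. unfold metric_RR. rewrite (dir_scaled_dot O); auto.
  rewrite (dot_comm (nR p)). field.
Qed.

Lemma pdL_metric_LR q : O q -> pdL (metric_LR n) q = - / 4 * dot (nLL q) (nR q).
Proof.
  intros Hq. unfold metric_LR. rewrite (dir_scaled_dot O); auto.
  rewrite (dot_comm (nL q)), dot_nLR_nL by exact Hq. ring.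
Qed.

Lemma pdR_metric_LR p : O p -> pdR (metric_LR n) p = - / 4 * dot (nRR p) (nL p).
Proof.
  intros Hp. unfold metric_LR. rewrite (dir_scaled_dot O); auto.
  rewrite dot_nRL_nR, (dot_comm (nL p)) by exact Hp. ring.
Qed.

Lemma pdR_pdL_metric_LR p : O p ->
  pdR (pdL (metric_LR n)) p = - / 4 * (dot (nLL p) (nRR p) - s p ^ 2).
Proof.
  intros Hp.
  rewrite (dir_ext O HO pdR dir_deriv_pdR _ (fun q => - / 4 * dot (nLL q) (nR q)));
    auto using pdL_metric_LR.
  rewrite (dir_scaled_dot O), dot_nLLR_nR; auto. ring.
Qed.

Lemma metric_det_pos q : O q -> 0 < metric_LL n q * metric_RR n q - metric_LR n q ^ 2.
Proof.
  intros Hq. pose proof (metric_nondeg q Hq). pose proof (dot_sqr_le (nL q) (nR q)).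
  unfold metric_LL, metric_RR, metric_LR in *. nra.
Qed.

Lemma metric_LL_pos q : O q -> 0 < metric_LL n q.
Proof.
  intros Hq. pose proof (metric_det_pos q Hq). pose proof (dot_self_ge0 (nL q)).
  pose proof (dot_self_ge0 (nR q)). unfold metric_LL, metric_RR, metric_LR in *. nra.
Qed.

Lemma wave_map_curvature p : O p ->
  gauss_curvature (metric_LL n) (metric_LR n) (metric_RR n) p = -4.
Proof.
  intros Hp.
  rewrite (gauss_curvature_explicit O HO); auto using metric_LL_regular, metric_LR_regular,
    metric_RR_regular, metric_LL_pos, metric_det_pos.
  rewrite pdL_metric_LL, pdR_metric_LL, pdR_metric_RR, pdL_metric_LR, pdR_metric_LR,
    pdR_pdL_metric_LL, pdR_pdL_metric_LR by exact Hp.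
  pose proof (metric_det_pos p Hp) as Hdet. pose proof (metric_LL_pos p Hp) as HLL.
  unfold metric_LL, metric_LR, metric_RR in *.
  apply curvature_expr_wave; [lra | nra |].
  rewrite (dot_gram_orthonormal _ _ (n p)), dot_nLL_n, dot_nRR_n; auto using dot_nL_n, dot_nR_n.
  ring.
Qed.

End WaveMap.

(** * The Hopf map *)

Definition sqnorm (z : C2) : R :=
  Re (fst z) * Re (fst z) + Im (fst z) * Im (fst z)
  + Re (snd z) * Re (snd z) + Im (snd z) * Im (snd z).

(* [z ↦ z†σz / z†z] with [σ] the Pauli matrices; the projector is
   [P = (1 - hopf f · σ) / 2]. *)
Definition hopf (z : C2) : vec3 :=
  let x1 := Re (fst z) in let y1 := Im (fst z) in let x2 := Re (snd z) in let y2 := Im (snd z) in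
  Vec3 (2 * (x1 * x2 + y1 * y2) / sqnorm z) (2 * (x1 * y2 - y1 * x2) / sqnorm z)
       ((x1 * x1 + y1 * y1 - x2 * x2 - y2 * y2) / sqnorm z).

Definition dhopf (z w : C2) : vec3 :=
  let x1 := Re (fst z) in let y1 := Im (fst z) in let x2 := Re (snd z) in let y2 := Im (snd z) in
  let a1 := Re (fst w) in let b1 := Im (fst w) in let a2 := Re (snd w) in let b2 := Im (snd w) in
  let N := sqnorm z in
  let dN := 2 * (x1 * a1 + y1 * b1 + x2 * a2 + y2 * b2) in
  Vec3 ((2 * (a1 * x2 + x1 * a2 + b1 * y2 + y1 * b2) * N - 2 * (x1 * x2 + y1 * y2) * dN) / (N * N))
       ((2 * (a1 * y2 + x1 * b2 - b1 * x2 - y1 * a2) * N - 2 * (x1 * y2 - y1 * x2) * dN) / (N * N))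
       ((2 * (x1 * a1 + y1 * b1 - x2 * a2 - y2 * b2) * N
         - (x1 * x1 + y1 * y1 - x2 * x2 - y2 * y2) * dN) / (N * N)).

Lemma sqnorm_neq0 z : z <> vzero -> sqnorm z <> 0.
Proof.
  destruct z as [[x1 y1] [x2 y2]]. unfold sqnorm. cbn. intros Hz H0. apply Hz.
  assert (x1 = 0) by nra. assert (y1 = 0) by nra. assert (x2 = 0) by nra. assert (y2 = 0) by nra.
  subst. reflexivity.
Qed.

Lemma herm_diag z : herm z z = RtoC (sqnorm z).
Proof.
  destruct z as [[x1 y1] [x2 y2]].
  unfold herm, sqnorm, RtoC, Cmult, Cplus, Cconj. cbn. f_equal; ring.
Qed.

Lemma Cdiv_RtoC z r : r <> 0 -> Cdiv z (RtoC r) = (Re z / r, Im z / r).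
Proof.
  intros Hr. destruct z as [a b]. unfold Cdiv, Cmult, Cinv, RtoC. cbn. f_equal; field; exact Hr.
Qed.

Lemma hopf_unit z : sqnorm z <> 0 -> dot (hopf z) (hopf z) = 1.
Proof. intros Hz. unfold dot, hopf. unfold sqnorm in *. cbn. field. exact Hz. Qed.

Lemma Pproj_metric z w v : sqnorm z <> 0 ->
  Re (Cdiv (herm w (Pproj z v)) (herm z z)) = / 4 * dot (dhopf z w) (dhopf z v).
Proof.
  intros Hz. unfold Pproj. rewrite herm_diag, !Cdiv_RtoC by exact Hz.
  destruct z as [[x1 y1] [x2 y2]], w as [[a1 b1] [a2 b2]], v as [[c1 d1] [c2 d2]].
  unfold sqnorm in *.
  unfold dot, dhopf, sqnorm, herm, vsub, vscal, Cminus, Copp, Cmult, Cplus, Cconj. cbn.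
  field. exact Hz.
Qed.

Lemma Pproj_sub_eq_zero z x y :
  Pproj z (vsub x y) = vzero -> exists mu : C, x = vadd y (vscal mu z).
Proof.
  unfold Pproj. generalize (Cdiv (herm z (vsub x y)) (herm z z)) as mu. intros mu H. exists mu.
  destruct z as [[z1 z2] [z3 z4]], x as [[x1 x2] [x3 x4]], y as [[y1 y2] [y3 y4]], mu as [m1 m2].
  unfold vadd, vsub, vscal, vzero, Cminus, Copp, Cplus, Cmult, RtoC in *. cbn in *.
  injection H as H1 H2 H3 H4. repeat f_equal; lra.
Qed.

Definition cD (D : (pt -> R) -> pt -> R) (F : pt -> C2) (p : pt) : C2 :=
  ((D (fun q => Re (fst (F q))) p, D (fun q => Im (fst (F q))) p),
   (D (fun q => Re (snd (F q))) p, D (fun q => Im (snd (F q))) p)).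

Definition regularC2 (O : pt -> Prop) (F : pt -> C2) : Prop :=
  regular O (fun q => Re (fst (F q))) /\ regular O (fun q => Im (fst (F q))) /\
  regular O (fun q => Re (snd (F q))) /\ regular O (fun q => Im (snd (F q))).

Section HopfMap.
Variables (O : pt -> Prop) (f : pt -> C2).
Hypotheses (HO : open O)
  (f_reg : regularC2 O f)
  (f_nz : forall q, O q -> sqnorm (f q) <> 0).

Lemma hopf_regular : regularV O (fun q => hopf (f q)).
Proof.
  destruct f_reg as (H1 & H2 & H3 & H4).
  unfold regularV, hopf, sqnorm in *. cbn. repeat split; regular_tac.
Qed.

Lemma vD_hopf D p : dir_deriv D -> O p -> vD D (fun q => hopf (f q)) p = dhopf (f p) (cD D f p).
Proof.
  intros HD Hp. destruct f_reg as (H1 & H2 & H3 & H4).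
  unfold vD, hopf, dhopf, cD, sqnorm in *. cbn. expand D HD. f_equal; field; auto.
Qed.

Lemma J_L_hopf q : O q -> J_L f q = metric_LL (fun r => hopf (f r)) q.
Proof.
  intros Hq. unfold J_L, metric_LL. rewrite Pproj_metric, vD_hopf; auto using dir_deriv_pdL.
Qed.

Lemma J_R_hopf q : O q -> J_R f q = metric_RR (fun r => hopf (f r)) q.
Proof.
  intros Hq. unfold J_R, metric_RR. rewrite Pproj_metric, vD_hopf; auto using dir_deriv_pdR.
Qed.

Lemma G_LR_hopf q : O q -> G_LR f q = metric_LR (fun r => hopf (f r)) q.
Proof.
  intros Hq. unfold G_LR, metric_LR.
  change (vdL f q) with (cD pdL f q). change (vdR f q) with (cD pdR f q).
  rewrite Pproj_metric, dot_comm, !vD_hopf; auto using dir_deriv_pdL, dir_deriv_pdR. ring.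
Qed.

Hypothesis f_EL : forall q, O q -> CP1_EL f q.

Lemma hopf_wave p : O p ->
  vD pdL (vD pdR (fun q => hopf (f q))) p =
  scale (- dot (vD pdL (fun q => hopf (f q)) p) (vD pdR (fun q => hopf (f q)) p)) (hopf (f p)).
Proof.
  intros Hp.
  rewrite (vD_ext O HO pdL _ (fun q => dhopf (f q) (cD pdR f q))), !vD_hopf;
    auto using dir_deriv_pdL, dir_deriv_pdR, vD_hopf.
  (* The Euler-Lagrange equation fixes f_LR up to a complex multiple of f,
     which [dhopf (f p)] annihilates. *)
  destruct (Pproj_sub_eq_zero _ _ _ (f_EL p Hp)) as [mu Hmu].
  destruct f_reg as (H1 & H2 & H3 & H4). pose proof (f_nz p Hp) as Hnz.
  rewrite herm_diag in Hmu.
  unfold vsub, vadd, vscal, herm, Cinv, Cmult, Cplus, Cconj, Cminus, Copp, RtoC in Hmu. cbn in Hmu.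
  injection Hmu as E1 E2 E3 E4.
  (* [expand_L] produces the eta-contracted [pdL (pdR g) p]. *)
  repeat match goal with E : context [fun q : pt => pdR ?g q] |- _ =>
    change (fun q : pt => pdR g q) with (pdR g) in E end.
  unfold vD, dhopf, cD, scale, dot, hopf, sqnorm in *. cbn. unfold Re, Im in *.
  expand_L. rewrite E1, E2, E3, E4.
  f_equal; field; exact Hnz.
Qed.

End HopfMap.

Theorem mainTheorem2 (Omega : pt -> Prop) (f : pt -> C2) :
  open_R2 Omega -> connected_R2 Omega -> simply_connected_R2 Omega ->
  (exists p0, Omega p0) ->
  smoothC2_on Omega f ->
  (forall p, Omega p -> f p <> vzero) ->
  (forall p, Omega p -> CP1_EL f p) ->
  (forall p, Omega p -> detG f p <> 0) ->
  forall p, Omega p -> gaussK f p = -4.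
Proof.
  intros HO _ _ _ (S1 & S2 & S3 & S4) Hnz HEL Hdet p Hp. unfold open_R2 in HO.
  assert (f_reg : regularC2 Omega f) by (repeat split; now apply regular_smooth).
  assert (f_nz : forall q, Omega q -> sqnorm (f q) <> 0) by (intros; now apply sqnorm_neq0, Hnz).
  change (gaussK f p) with (gauss_curvature (J_L f) (G_LR f) (J_R f) p).
  rewrite (gauss_curvature_ext Omega HO _ _ _ (metric_LL (fun q => hopf (f q)))
             (metric_LR (fun q => hopf (f q))) (metric_RR (fun q => hopf (f q))));
    eauto using J_L_hopf, G_LR_hopf, J_R_hopf.
  apply (wave_map_curvature Omega); eauto using hopf_regular, hopf_wave.
  - intros q Hq. now apply hopf_unit, f_nz.
  - intros q Hq. erewrite <- J_L_hopf, <- J_R_hopf, <- G_LR_hopf by eauto. now apply Hdet.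
Qed.
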